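(* In the two-period scalar linear structural model described in the context, satisfying (A1)–(A5), additionally matching on the pre-treatment outcome always (weakly) reduces the first-order variance relative to matching only on the observed covariate: $\mathrm{Var}(\hat\tau^{X}_{\mathrm{DiD}})\ge\mathrm{Var}(\hat\tau^{X,Y_0}_{\mathrm{DiD}})$.
   Context: Setting: $n$ units $i=1,\dots,n$; binary treatment indicator $Z_i\in\{0,1\}$; two periods $t=0$ (pre-treatment) and $t=1$ (post-treatment; treatment is received only at $t=1$). Let $n_1=\sum_i Z_i$, $n_0=n-n_1$, with $n_0\ge n_1\ge 1$. Each unit has a time-invariant latent variable $\theta_i\in\mathbb{R}$ and observed covariate $X_i\in\mathbb{R}$. Potential outcomes: $Y_{i,t}(0)=\beta_{0,t}+\beta_{\theta,t}\theta_i+\beta_{x,t}X_i+\epsilon_{i,t}$, $Y_{i,t}(1)=Y_{i,t}(0)+\tau\,\mathbf{1}(t=1)$, with fixed constants; observed $Y_{i,t}=Z_iY_{i,t}(1)+(1-Z_i)Y_{i,t}(0)$. Assumptions: (A1) $(Y_{i,0},Y_{i,1},Z_i,\theta_i,X_i)$ i.i.d. across $i$. (A2) $\epsilon_{i,t}$ independent of $(\theta_i,X_i,Z_i)$, mean $0$, variance $\sigma_E^2>0$, independent across $t$, finite fourth moment. (A3) $\mathbb{E}[\theta_i\mid Z_i=z]=\mu_{\theta,z}$, $\mathbb{E}[X_i\mid Z_i=z]=\mu_{x,z}$; $\mathrm{Var}(\theta_i\mid Z_i=z)=\sigma_\theta^2>0$, $\mathrm{Var}(X_i\mid Z_i=z)=\sigma_x^2>0$,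 $\mathrm{Cov}(\theta_i,X_i\mid Z_i=z)=\rho\sigma_\theta\sigma_x$, independent of $z$; finite fourth moments of $\theta_i,X_i$. (A4) $n_1/n\to p\in(0,1/2]$ in probability, $p=\mathbb{P}(Z_i=1)$. (A5) Matching on $W_i$: an injective map $\mathcal{M}$ from treated units to control units with image $\mathcal{C}'$ of size $n_1$, with $\frac1{n_1}\sum_{i\text{ treated}}\|W_{\mathcal{M}(i)}-W_i\|_2=o_p(n^{-1/2})$ and $\frac1{n_1}\sum_{i\text{ treated}}\|W_{\mathcal{M}(i)}-W_i\|_2^2=o_p(n^{-1})$; $M_i=\mathbf{1}(i\in\mathcal{C}')$. Estimators: $\hat\tau^{X}_{\mathrm{DiD}}=\frac1{n_1}\sum_i(Y_{i,1}-Y_{i,0})Z_i-\frac1{n_1}\sum_i(Y_{i,1}-Y_{i,0})M_i$ with matching on $W_i=X_i$; $\hat\tau^{X,Y_0}_{\mathrm{DiD}}=\frac1{n_1}\sum_iY_{i,1}Z_i-\frac1{n_1}\sum_iY_{i,1}M_i$ with matching on $W_i=(X_i,Y_{i,0})$. Convention: variances are first-order: ''$\mathrm{Var}(\hat\tau)=V$'' means $\mathrm{Var}(\hat\tau)=V+o_p(n^{-1})$ with the realized $n_1$ treated as given; comparisons of variances are comparisons of these leading-order expressions. *)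

From HB Require Import structures.
From mathcomp Require Import all_boot all_order all_algebra.
Set Implicit Arguments. Unset Strict Implicit. Unset Printing Implicit Defensive.
Import Order.TTheory GRing.Theory Num.Theory.
Local Open Scope ring_scope.

(* A random variable that is a linear combination
      c_th * theta + c_x * X + c_0 * eps_0 + c_1 * eps_1
   (constants and the treatment effect are dropped: they do not affect
   (co)variances).  Within each treatment arm, (A2)-(A3) fix the covariance
   structure of (theta, X, eps_0, eps_1), identical across arms. *)
Record lincomb (R : Type) := LC { c_th : R; c_x : R; c_0 : R; c_1 : R }.

Section Model.
Variable R : realFieldType.

Definition cov (sth sx rho sE : R) (u v : lincomb R) : R :=
  c_th u * c_th v * sth ^+ 2
  + (c_th u * c_x v + c_x u * c_th v) * (rho * sth * sx)
  + c_x u * c_x v * sx ^+ 2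
  + c_0 u * c_0 v * sE ^+ 2
  + c_1 u * c_1 v * sE ^+ 2.

Definition Xv : lincomb R := LC 0 1 0 0.
Definition Y0v (bth0 bx0 : R) : lincomb R := LC bth0 bx0 1 0.
Definition Y1v (bth1 bx1 : R) : lincomb R := LC bth1 bx1 0 1.
Definition diffv (u v : lincomb R) : lincomb R :=
  LC (c_th u - c_th v) (c_x u - c_x v) (c_0 u - c_0 v) (c_1 u - c_1 v).

(* within-arm residual variance of O after (linear) adjustment for one
   matching variable W *)
Definition resvar1 (sth sx rho sE : R) (O W : lincomb R) : R :=
  let C := cov sth sx rho sE in
  C O O - (C O W) ^+ 2 / C W W.

(* within-arm residual variance of O after adjustment for two matching
   variables (W1, W2): Var(O) - c' S^{-1} c  with S = Var(W1,W2) *)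
Definition resvar2 (sth sx rho sE : R) (O W1 W2 : lincomb R) : R :=
  let C := cov sth sx rho sE in
  let a := C W1 W1 in let b := C W1 W2 in let d := C W2 W2 in
  let p := C O W1 in let q := C O W2 in
  C O O - (d * p ^+ 2 - 2 * b * p * q + a * q ^+ 2) / (a * d - b ^+ 2).

(* first-order variance of  (1/n1) sum_treated O_i - (1/n1) sum_matched O_i
   when matching makes the matching variables asymptotically equal:
   each of the two arms contributes (residual variance)/n1. *)
Definition var_DiD_X (n1 : nat) (sth sx rho sE bth0 bth1 bx0 bx1 : R) : R :=
  2 * resvar1 sth sx rho sE (diffv (Y1v bth1 bx1) (Y0v bth0 bx0)) Xv / n1%:R.

Definition var_DiD_XY0 (n1 : nat) (sth sx rho sE bth0 bth1 bx0 bx1 : R) : R :=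
  2 * resvar2 sth sx rho sE (Y1v bth1 bx1) Xv (Y0v bth0 bx0) / n1%:R.

End Model.

From Pilot Require Import Defs.
From HB Require Import structures.
From mathcomp Require Import all_boot all_order all_algebra.
From mathcomp Require Import ring lra.
Set Implicit Arguments. Unset Strict Implicit. Unset Printing Implicit Defensive.
Import Order.TTheory GRing.Theory Num.Theory.
Local Open Scope ring_scope.

(* Since Y0 is itself one of the matching variables, the residual variance of
   Y1 after adjusting for (X, Y0) equals that of Y1 - Y0 after adjusting for
   (X, Y0).  Adjusting for a further variable never increases a residual
   variance: the decrease is the Schur-complement term (a q - b p)^2 / (a D),
   with a = Var W1, b = Cov(W1, W2), p = Cov(O, W1), q = Cov(O, W2) and D the
   Gram determinant of (W1, W2).  Hence the residual variance of Y1 - Y0 given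
   X alone, which is what matching on X leaves, dominates. *)

Section Residuals.
Variables (R : realFieldType) (sth sx rho sE : R).
Local Notation C := (cov sth sx rho sE).
Local Notation resvar1 := (resvar1 sth sx rho sE).
Local Notation resvar2 := (resvar2 sth sx rho sE).

Lemma cov_sym (u v : lincomb R) : C u v = C v u.
Proof. by rewrite /cov; ring. Qed.

Lemma cov_diffvl (u v w : lincomb R) : C (Defs.diffv u v) w = C u w - C v w.
Proof. by rewrite /cov /=; ring. Qed.

Lemma cov_diffvr (u v w : lincomb R) : C w (Defs.diffv u v) = C w u - C w v.
Proof. by rewrite cov_sym cov_diffvl !(cov_sym w). Qed.

Definition gram_det (W1 W2 : lincomb R) : R :=
  C W1 W1 * C W2 W2 - C W1 W2 ^+ 2.

Lemma resvar2_diffv (O W1 W2 : lincomb R) : gram_det W1 W2 != 0 ->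
  resvar2 (Defs.diffv O W2) W1 W2 = resvar2 O W1 W2.
Proof.
rewrite /gram_det /resvar2 /= !cov_diffvl !cov_diffvr (cov_sym W2 W1) (cov_sym W2 O).
by move=> D_neq0; field.
Qed.

Lemma resvar2_le_resvar1 (O W1 W2 : lincomb R) :
  0 < C W1 W1 -> 0 < gram_det W1 W2 -> resvar2 O W1 W2 <= resvar1 O W1.
Proof.
rewrite /gram_det /resvar1 /resvar2 /=.
set a := C W1 W1; set b := C W1 W2; set d := C W2 W2.
set p := C O W1; set q := C O W2 => a_gt0 D_gt0.
rewrite -subr_ge0.
have -> : C O O - p ^+ 2 / a - (C O O - (d * p ^+ 2 - 2 * b * p * q + a * q ^+ 2)
    / (a * d - b ^+ 2)) = (a * q - b * p) ^+ 2 / (a * (a * d - b ^+ 2)).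
  by field; rewrite !gt_eqF.
by rewrite divr_ge0 ?sqr_ge0 // ltW // mulr_gt0.
Qed.

Lemma cov_Xv_Xv : C (Xv R) (Xv R) = sx ^+ 2.
Proof. by rewrite /cov /=; ring. Qed.

Lemma gram_det_Xv_Y0v (bth0 bx0 : R) :
  gram_det (Xv R) (Y0v bth0 bx0)
  = sx ^+ 2 * (sE ^+ 2 + bth0 ^+ 2 * sth ^+ 2 * (1 - rho ^+ 2)).
Proof. by rewrite /gram_det /cov /=; ring. Qed.

Lemma gram_det_Xv_Y0v_gt0 (bth0 bx0 : R) :
  0 < sx -> -1 <= rho <= 1 -> 0 < sE -> 0 < gram_det (Xv R) (Y0v bth0 bx0).
Proof.
move=> sx_gt0 /andP[rho_ge rho_le] sE_gt0.
have rho2_le1 : rho ^+ 2 <= 1 by nra.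
rewrite gram_det_Xv_Y0v mulr_gt0 ?exprn_gt0 // ltr_pwDl ?exprn_gt0 //.
by rewrite mulr_ge0 ?subr_ge0 // mulr_ge0 ?sqr_ge0.
Qed.

End Residuals.

Theorem lemma3p3 (R : realFieldType) (n n1 : nat)
  (sth sx rho sE bth0 bth1 bx0 bx1 : R) :
  (0 < n1)%N -> (n1 <= n - n1)%N ->
  0 < sth -> 0 < sx -> -1 <= rho <= 1 -> 0 < sE ->
  var_DiD_XY0 n1 sth sx rho sE bth0 bth1 bx0 bx1
    <= var_DiD_X n1 sth sx rho sE bth0 bth1 bx0 bx1.
Proof.
move=> _ _ _ sx_gt0 rho_bd sE_gt0.
have D_gt0 : 0 < gram_det sth sx rho sE (Xv R) (Y0v bth0 bx0).
  exact: gram_det_Xv_Y0v_gt0.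
rewrite /var_DiD_XY0 /var_DiD_X ler_wpM2r ?invr_ge0 ?ler0n // ler_pM2l //.
rewrite -resvar2_diffv ?gt_eqF //.
by apply: resvar2_le_resvar1; rewrite // cov_Xv_Xv exprn_gt0.
Qed.
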